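(* Let $Z'$ be a Markov chain with transition matrix $\mathbf P_{Z'}$ on a finite state space $\mathbb E'=\{-\infty\}\cup\mathbb E$, $\mathbb E=\{\mathbf e_1,\ldots,\mathbf e_M\}$, having two absorbing states $-\infty$ and $\mathbf e_M$. Let $\mathbf P_Z$ be the substochastic $M\times M$ matrix obtained from $\mathbf P_{Z'}$ by deleting the row and column of $-\infty$. Fix a partial order $\preceq$ on $\mathbb E$ in which $\mathbf e_M$ is the unique maximal element, let $\mathbf C(\mathbf e,\mathbf e')=\mathbf 1(\mathbf e\preceq\mathbf e')$, and define $\mathbf P_X=\mathbf C\,\mathbf P_Z^T\,\mathbf C^{-1}$. Then every row of $\mathbf P_X$ sums to $1$, i.e. $\sum_{\mathbf e_2\in\mathbb E}\mathbf P_X(\mathbf e,\mathbf e_2)=1$ for all $\mathbf e\in\mathbb E$. Moreover, if there exists $\pi:\mathbb E\to\mathbb R$ with $\sum_{\mathbf e\in\mathbb E}\pi(\mathbf e)=1$ and $\lim_{n\to\infty}\mathbf P_X^n(\mathbf e_2,\mathbf e)=\pi(\mathbf e)$ for all $\mathbf e,\mathbf e_2\in\mathbb E$, then for every $\mathbf e'\in\mathbb E$, $$P(\tau_{\mathbf e_M}<\tau_{-\infty}\mid Z'_0=\mathbf e')=\pi(\{\mathbf e'\}^{\downarrow}),$$ where $\tau_{\mathbf e}=\inf\{n\ge0:Z'_n=\mathbf e\}$.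
   Context: $\mathbf C$ is invertible (it is triangular w.r.t. a linear extension with unit diagonal); its inverse is the Möbius function $\mu$ of the order. For $A\subseteq\mathbb E$, $\pi(A)=\sum_{\mathbf e\in A}\pi(\mathbf e)$, and $\{\mathbf e\}^{\downarrow}=\{\mathbf e'\in\mathbb E:\mathbf e'\preceq\mathbf e\}$. The matrix $\mathbf P_X$ may have negative entries; no nonnegativity is assumed. *)

From HB Require Import structures.
From mathcomp Require Import all_boot all_order all_algebra.
Set Implicit Arguments. Unset Strict Implicit. Unset Printing Implicit Defensive.
Import Order.TTheory GRing.Theory Num.Theory.
Local Open Scope ring_scope.

Definition seq_lim (R : realFieldType) (u : nat -> R) (l : R) : Prop :=
  forall eps : R, 0 < eps -> exists N : nat, forall k : nat, (N <= k)%N -> `|u k - l| < eps.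

(* probability of the path x = x_0, x_1, ..., x_k (w = [:: x_1; ...; x_k])
   for a chain with transition kernel P started at x *)
Definition path_prob (R : realFieldType) (S : finType) (P : S -> S -> R)
    (x : S) (w : seq S) : R :=
  \prod_(p <- zip (x :: w) w) P p.1 p.2.

(* P(tau_a = k and tau_b > k | Z_0 = x), where tau_y = inf{n >= 0 : Z_n = y}:
   sum of the probabilities of the paths x_0 = x, ..., x_k with x_k = a and
   x_i not in {a, b} for i < k *)
Definition hit_at (R : realFieldType) (S : finType) (P : S -> S -> R)
    (a b x : S) (k : nat) : R :=
  \sum_(w : k.-tuple S | (last x w == a) &&
                         all (fun y => (y != a) && (y != b)) (belast x w))
     path_prob P x w.

(* P(tau_a < tau_b | Z_0 = x) = sum_{k >= 0} P(tau_a = k, tau_b > k | Z_0 = x);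
   "hit_before P a b x p" means this probability equals p *)
Definition hit_before (R : realFieldType) (S : finType) (P : S -> S -> R)
    (a b x : S) (p : R) : Prop :=
  seq_lim (fun N => \sum_(k < N) hit_at P a b x k) p.

(* E' = option 'I_n.+1, with None = -infinity and Some e for e in E *)
Definition PZ_of (R : realFieldType) (n : nat)
    (P' : option 'I_n.+1 -> option 'I_n.+1 -> R) : 'M[R]_n.+1 :=
  \matrix_(i, j) P' (Some i) (Some j).

Definition Cmx (R : realFieldType) (n : nat) (le : rel 'I_n.+1) : 'M[R]_n.+1 :=
  \matrix_(i, j) (le i j)%:R.

Definition PX_of (R : realFieldType) (n : nat) (le : rel 'I_n.+1)
    (P' : option 'I_n.+1 -> option 'I_n.+1 -> R) : 'M[R]_n.+1 :=
  Cmx R le *m (PZ_of P')^T *m invmx (Cmx R le).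

From HB Require Import structures.
From mathcomp Require Import all_boot all_order all_algebra.
From mathcomp Require Import lra.
Set Implicit Arguments. Unset Strict Implicit. Unset Printing Implicit Defensive.
Import Order.TTheory GRing.Theory Num.Theory.
Local Open Scope ring_scope.

(* As e_M is the top of the order, C maps
   the indicator column of e_M to the all-ones column, and as e_M is
   absorbing, P_Z^T fixes that indicator; hence P_X 1 = C P_Z^T C^-1 1 = 1.
   Conjugating back, P_Z^k(e', e_M) is the (e_M, e') entry of C^-1 P_X^k C,
   which tends to sum_b (sum_a C^-1(e_M, a)) pi(b) C(b, e') = pi({e'}^down),
   the e_M-th row sum of C^-1 being 1 by the same identity.  Finally, e_M
   being absorbing, P_Z^k(e', e_M) is the probability of reaching e_M within
   k steps along paths that P_Z has not killed, i.e. avoiding -oo. *)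

Section SeqLim.
Variable R : realFieldType.
Implicit Types (u v : nat -> R) (a b c : R).

Lemma eq_seq_lim u v a : u =1 v -> seq_lim u a -> seq_lim v a.
Proof. by move=> e h eps /h [N HN]; exists N => k /HN; rewrite e. Qed.

Lemma seq_lim_cst c : seq_lim (fun=> c) c.
Proof. by move=> eps he; exists 0%N => k _; rewrite subrr normr0. Qed.

Lemma seq_limD u v a b :
  seq_lim u a -> seq_lim v b -> seq_lim (fun k => u k + v k) (a + b).
Proof.
move=> hu hv eps he.
have he2 : 0 < eps / 2 by lra.
have [N1 H1] := hu _ he2; have [N2 H2] := hv _ he2.
exists (maxn N1 N2) => k; rewrite geq_max => /andP[/H1 hk1 /H2 hk2].
have := ler_normD (u k - a) (v k - b).
have -> : u k - a + (v k - b) = u k + v k - (a + b) by rewrite addrACA opprD.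
lra.
Qed.

Lemma seq_limMl u a c : seq_lim u a -> seq_lim (fun k => c * u k) (c * a).
Proof.
move=> hu; have [->|c_neq0] := eqVneq c 0.
  by rewrite mul0r; apply: eq_seq_lim (seq_lim_cst 0) => k; rewrite mul0r.
have c_gt0 : 0 < `|c| by rewrite normr_gt0.
move=> eps he; have [|N HN] := hu (eps / `|c|); first by rewrite divr_gt0.
exists N => k /HN hk; rewrite -mulrBr normrM.
by rewrite -(ltr_pM2l c_gt0) mulrCA divff ?mulr1 ?gt_eqF in hk.
Qed.

Lemma seq_lim_sum (I : finType) (u : I -> nat -> R) (l : I -> R) :
  (forall i, seq_lim (u i) (l i)) ->
  seq_lim (fun k => \sum_i u i k) (\sum_i l i).
Proof.
move=> hu; rewrite unlock; elim: (index_enum I) => [|i r IH] /=.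
  exact: seq_lim_cst.
exact: seq_limD.
Qed.

Lemma seq_lim_succ u a : seq_lim (fun k => u k.+1) a -> seq_lim u a.
Proof. by move=> h eps /h [N HN]; exists N.+1 => -[//|k] /HN. Qed.

End SeqLim.

Lemma big_tuple0 (V : nmodType) (S : finType) (F : 0.-tuple S -> V) :
  \sum_(w : 0.-tuple S) F w = F [tuple].
Proof. by rewrite (bigD1 [tuple]) //= big1 ?addr0 // => t; rewrite tuple0 => /negP. Qed.

Lemma big_tupleS (V : nmodType) (S : finType) k (F : k.+1.-tuple S -> V) :
  \sum_(w : k.+1.-tuple S) F w =
  \sum_(y : S) \sum_(w : k.-tuple S) F [tuple of y :: w].
Proof.
rewrite pair_big /= (reindex (fun p : S * k.-tuple S => [tuple of p.1 :: p.2])) //=.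
exists (fun w : k.+1.-tuple S => (thead w, [tuple of behead w])) => [[y w]|w] _.
  by congr pair; apply: val_inj.
by case/tupleP: w => y w; apply: val_inj.
Qed.

Lemma big_option (V : nmodType) (T : finType) (F : option T -> V) :
  \sum_(y : option T) F y = F None + \sum_(x : T) F (Some x).
Proof.
rewrite (bigD1 None) //= (reindex_omap Some id) => [|[x|] //].
by congr (_ + _); apply: eq_bigl => x; rewrite eqxx.
Qed.

Lemma mass1_point_mass (R : numDomainType) (S : finType) (p : S -> R) x :
  (forall y, 0 <= p y) -> \sum_y p y = 1 -> p x = 1 ->
  forall y, p y = (y == x)%:R.
Proof.
move=> p_ge0 p_sum1 px1 y; have [->|y_neq_x] := eqVneq y x; first by rewrite px1.
have : \sum_(z | z != x) p z = 0.
  by move: p_sum1; rewrite (bigD1 x) //= px1 -[RHS]addr0 => /addrI.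
by move/psumr_eq0P; apply.
Qed.

Lemma card_downset_lt (T : finType) (r : rel T) :
  (forall x, r x x) -> (forall x y, r x y -> r y x -> x = y) ->
  (forall x y z, r x y -> r y z -> r x z) ->
  forall x y, r x y -> x != y -> (#|[set z | r z x]| < #|[set z | r z y]|)%N.
Proof.
move=> r_refl r_anti r_trans x y rxy x_neq_y.
apply: proper_card; apply/properP; split.
  by apply/subsetP => z; rewrite !inE => /r_trans; apply.
exists y; rewrite !inE ?r_refl //; apply: contra x_neq_y => ryx.
by rewrite (r_anti _ _ rxy ryx).
Qed.

Lemma conjmx_expr (R : comUnitRingType) n (A B : 'M[R]_n.+1) k :
  A \in unitmx -> (A *m B *m invmx A) ^+ k = A *m B ^+ k *m invmx A.
Proof.
move=> A_unit; elim: k => [|k IH]; first by rewrite !expr0 mulmx1 mulmxV.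
by rewrite !exprSr IH -!mulmxE !mulmxA mulmxKV.
Qed.

Lemma trmxX (R : comNzRingType) n (A : 'M[R]_n.+1) k :
  A^T ^+ k = (A ^+ k)^T.
Proof.
elim: k => [|k IH]; first by rewrite !expr0 trmx1.
by rewrite exprS IH exprSr -!mulmxE trmx_mul.
Qed.

Section HittingTimes.
Variables (R : realFieldType) (S : finType) (P : S -> S -> R) (a b : S).

Lemma hit_at0 x : hit_at P a b x 0 = (x == a)%:R.
Proof.
by rewrite /hit_at big_mkcond big_tuple0 /path_prob /= big_nil; case: (x == a).
Qed.

Lemma hit_atS x k :
  hit_at P a b x k.+1 =
  ((x != a) && (x != b))%:R * \sum_y P x y * hit_at P a b y k.
rewrite /hit_at big_mkcond big_tupleS big_distrr; apply: eq_bigr => y _ /=.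
rewrite !big_distrr [in RHS]big_mkcond; apply: eq_bigr => w _ /=.
rewrite /path_prob /= big_cons /=.
case: ((x != a) && (x != b)); rewrite /= ?andbF ?mul0r ?mul1r //.
by case: ifP; rewrite ?mulr0.
Qed.
Lemma hit_at_avoided k : a != b -> hit_at P a b b k = 0.
Proof.
case: k => [|k] a_neq_b; first by rewrite hit_at0 eq_sym (negPf a_neq_b).
by rewrite hit_atS eqxx andbF mul0r.
Qed.
End HittingTimes.

Section KilledChain.
Variables (R : realFieldType) (n : nat)
  (P' : option 'I_n.+1 -> option 'I_n.+1 -> R) (eM : 'I_n.+1).
Hypotheses (P'_nonneg : forall x y, 0 <= P' x y)
  (P'_stoch : forall x, \sum_y P' x y = 1)
  (absorb_eM : P' (Some eM) (Some eM) = 1).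
Local Notation PZ := (PZ_of P').

Lemma PZ_absorbing_row j : PZ eM j = (j == eM)%:R.
Proof.
by rewrite mxE (mass1_point_mass (P'_nonneg _) (P'_stoch _) absorb_eM) (inj_eq Some_inj).
Qed.

Lemma PZX_absorbing k : (PZ ^+ k) eM eM = 1.
Proof.
elim: k => [|k IH]; first by rewrite expr0 mxE eqxx.
rewrite exprS -mulmxE mxE (bigD1 eM) //= IH PZ_absorbing_row eqxx mul1r.
by rewrite big1 ?addr0 // => j j_neq_eM; rewrite PZ_absorbing_row (negPf j_neq_eM) mul0r.
Qed.

Lemma trPZ_delta_absorbing : PZ^T *m delta_mx eM 0 = delta_mx eM 0 :> 'cV_n.+1.
Proof.
apply/colP => i; rewrite mxE (bigD1 eM) //= big1 => [|j j_neq_eM]; last first.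
  by rewrite [delta_mx _ _ _ _]mxE (negPf j_neq_eM) mulr0.
by rewrite !mxE eqxx mulr1 addr0 andbT -PZ_absorbing_row mxE.
Qed.

Lemma sum_hit_at_PZX k x :
  \sum_(j < k.+1) hit_at P' (Some eM) None (Some x) j = (PZ ^+ k) x eM.
Proof.
elim: k x => [|k IH] x.
  by rewrite big_ord1 hit_at0 expr0 mxE (inj_eq Some_inj).
rewrite big_ord_recl hit_at0 (inj_eq Some_inj).
have [->|x_neq_eM] := eqVneq x eM.
  by rewrite PZX_absorbing big1 ?addr0 // => j _; rewrite hit_atS eqxx mul0r.
under eq_bigr => j _ do rewrite lift0 hit_atS (inj_eq Some_inj) x_neq_eM /= mul1r.
rewrite add0r exchange_big /= big_option big1 ?add0r; last first.
  by move=> j _; rewrite hit_at_avoided ?mulr0.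
rewrite exprS -mulmxE mxE; apply: eq_bigr => y _.
by rewrite -big_distrr /= IH mxE.
Qed.

End KilledChain.

Section TopOrder.
Variables (R : realFieldType) (n : nat) (le : rel 'I_n.+1) (eM : 'I_n.+1).
Hypotheses (le_refl : forall e, le e e)
  (le_anti : forall e f, le e f -> le f e -> e = f)
  (le_trans : forall e f g, le e f -> le f g -> le e g)
  (eM_unique_max : forall m, (forall e, le m e -> e = m) -> m = eM).
Local Notation C := (Cmx R le).

(* A maximal element above [e] is one minimising the size of its upset. *)
Lemma le_top e : le e eM.
Proof.
pose up j := #|[set k | le j k]|.
have [j le_ej up_min] := @arg_minnP _ e (le e) up (le_refl e).
suff -> : eM = j by [].
apply/esym/eM_unique_max => k le_jk; apply/eqP/negPn/negP => k_neq_j.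
have := up_min k (le_trans le_ej le_jk); rewrite leqNgt => /negP; apply.
apply: (@card_downset_lt _ (fun x y => le y x)) => //.
- by move=> x y le_yx le_xy; apply: le_anti.
- by move=> x y z le_yx le_zy; apply: le_trans le_zy le_yx.
Qed.

Lemma mulmx_Cmx_eq0 (u : 'rV[R]_n.+1) : u *m C = 0 -> u = 0.
Proof.
move=> uC0; suff down_ind m j : (#|[set k | le k j]| <= m)%N -> u 0 j = 0.
  by apply/rowP => i; rewrite mxE (down_ind _ i (leqnn _)).
elim: m j => [|m IH] j j_down.
  by move: j_down; rewrite leqn0 => /eqP/cards0_eq/setP/(_ j); rewrite !inE le_refl.
have := congr1 (fun A : 'rV[R]_n.+1 => A 0 j) uC0.
rewrite !mxE (bigD1 j) //= mxE le_refl mulr1 big1 ?addr0 // => k k_neq_j.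
rewrite mxE; have [le_kj|] := boolP (le k j); last by rewrite mulr0.
rewrite IH ?mul0r // -ltnS (leq_trans _ j_down) //.
exact: card_downset_lt.
Qed.

Lemma Cmx_unit : C \in unitmx.
Proof.
rewrite -row_free_unit -kermx_eq0; apply/eqP/row_matrixP => i.
by rewrite row0; apply: mulmx_Cmx_eq0; apply/sub_kermxP; apply: row_sub.
Qed.

Lemma Cmx_delta_top : C *m delta_mx eM 0 = const_mx 1 :> 'cV_n.+1.
Proof.
apply/colP => i; rewrite !mxE (bigD1 eM) //= !mxE eqxx le_top mulr1.
by rewrite big1 ?addr0 // => j j_neq_eM; rewrite !mxE (negPf j_neq_eM) mulr0.
Qed.

Lemma invCmx_const1 : invmx C *m const_mx 1 = delta_mx eM 0 :> 'cV_n.+1.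
Proof. by rewrite -Cmx_delta_top mulKmx // Cmx_unit. Qed.

Lemma sum_invCmx_top_row : \sum_a invmx C eM a = 1.
Proof.
have := congr1 (fun A : 'cV[R]_n.+1 => A eM 0) invCmx_const1; rewrite !mxE !eqxx mulr1n => <-.
by apply: eq_bigr => j _; rewrite mxE mulr1.
Qed.

End TopOrder.

Section DualChain.
Variables (R : realFieldType) (n : nat)
  (P' : option 'I_n.+1 -> option 'I_n.+1 -> R) (eM : 'I_n.+1)
  (le : rel 'I_n.+1).
Hypotheses (P'_nonneg : forall x y, 0 <= P' x y)
  (P'_stoch : forall x, \sum_y P' x y = 1)
  (absorb_eM : P' (Some eM) (Some eM) = 1)
  (le_refl : forall e, le e e)
  (le_anti : forall e f, le e f -> le f e -> e = f)
  (le_trans : forall e f g, le e f -> le f g -> le e g)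
  (eM_unique_max : forall m, (forall e, le m e -> e = m) -> m = eM).
Local Notation C := (Cmx R le).
Local Notation PZ := (PZ_of P').
Local Notation PX := (PX_of le P').

Lemma PX_row_sum e : \sum_e2 PX e e2 = 1.
Proof.
have PX1 : PX *m const_mx 1 = const_mx 1 :> 'cV_n.+1.
  rewrite /PX_of -!mulmxA (invCmx_const1 R le_refl le_anti le_trans eM_unique_max).
  rewrite trPZ_delta_absorbing //.
  exact: (Cmx_delta_top R le_refl le_anti le_trans eM_unique_max).
have := congr1 (fun A : 'cV[R]_n.+1 => A e 0) PX1; rewrite !mxE => <-.
by apply: eq_bigr => j _; rewrite [const_mx _ _ _]mxE mulr1.
Qed.

Lemma PZX_entry k e' : (PZ ^+ k) e' eM = (invmx C *m PX ^+ k *m C) eM e'.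
Proof.
have C_unit := Cmx_unit R le_refl le_anti le_trans.
rewrite /PX_of conjmx_expr // !mulmxA mulVmx // mul1mx -mulmxA mulVmx // mulmx1.
by rewrite trmxX mxE.
Qed.

Lemma PZX_lim (pi : 'I_n.+1 -> R) e' :
  (forall e2 e, seq_lim (fun k => (PX ^+ k) e2 e) (pi e)) ->
  seq_lim (fun k => (PZ ^+ k) e' eM) (\sum_(e | le e e') pi e).
Proof.
move=> PX_lim.
have -> : \sum_(e | le e e') pi e = \sum_b \sum_a invmx C eM a * C b e' * pi b.
  rewrite [LHS]big_mkcond; apply: eq_bigr => b _.
  rewrite -!big_distrl /= (sum_invCmx_top_row R le_refl le_anti le_trans eM_unique_max).
  rewrite mul1r mxE.
  by case: (le b e'); rewrite ?mul1r ?mul0r.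
apply: eq_seq_lim (seq_lim_sum (fun b => seq_lim_sum (fun a => seq_limMl _ (PX_lim a b)))).
move=> k; rewrite PZX_entry mxE; apply: eq_bigr => b _; apply/esym.
by rewrite mxE big_distrl; apply: eq_bigr => a _; rewrite mulrAC.
Qed.

End DualChain.

Theorem theorem3p1 (R : realFieldType) (n : nat)
  (P' : option 'I_n.+1 -> option 'I_n.+1 -> R) (eM : 'I_n.+1)
  (le : rel 'I_n.+1)
  (P'_nonneg : forall x y, 0 <= P' x y)
  (P'_stoch : forall x, \sum_y P' x y = 1)
  (absorb_inf : P' None None = 1)
  (absorb_eM : P' (Some eM) (Some eM) = 1)
  (le_refl : forall e, le e e)
  (le_anti : forall e f, le e f -> le f e -> e = f)
  (le_trans : forall e f g, le e f -> le f g -> le e g)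
  (eM_max : forall e, le eM e -> e = eM)
  (eM_unique_max : forall m, (forall e, le m e -> e = m) -> m = eM) :
  (forall e, \sum_e2 (PX_of le P') e e2 = 1) /\
  (forall pi : 'I_n.+1 -> R,
     \sum_e pi e = 1 ->
     (forall e2 e, seq_lim (fun k => ((PX_of le P') ^+ k) e2 e) (pi e)) ->
     forall e', hit_before P' (Some eM) None (Some e')
                           (\sum_(e | le e e') pi e)).
Proof.
split=> [e|pi _ PX_lim e']; first by apply: (PX_row_sum P'_nonneg P'_stoch absorb_eM).
have PZ_lim : seq_lim (fun k => (PZ_of P' ^+ k) e' eM) (\sum_(e | le e e') pi e).
  by apply: PZX_lim.
apply: seq_lim_succ; apply: eq_seq_lim PZ_lim => k.
by rewrite sum_hit_at_PZX.
Qed.
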